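(* Let $G$ be a knot grid diagram and $K$ the oriented planar knot diagram it determines. Then $$M(\mathbf x^+(G))=-\mathrm{writhe}(K)-\#\{\text{downward-oriented cusps}\}+1,\qquad M(\mathbf x^-(G))=-\mathrm{writhe}(K)-\#\{\text{upward-oriented cusps}\}+1,$$ where the cusps are those of the front projection of the associated Legendrian knot $\vec{\mathcal K}(G)$.
   Context: A grid diagram $G$ of grid number $n$ is an $n\times n$ array of unit squares in the plane with lower-left corner at the origin, some marked $X$ and some $O$, with exactly one $X$ and one $O$ (in different squares) in every row and column. Drawing horizontal segments from $O$ to $X$ in each row and vertical segments from $X$ to $O$ in each column, vertical over horizontal at crossings, gives an oriented planar diagram $K$; $G$ is a knot grid diagram if $K$ is a knot. $\mathrm{writhe}(K)$ is the number of positive minus the number of negative crossings of $K$. The oriented Legendrian knot $\vec{\mathcal K}(G)$ has front projection obtained from $K$ by smoothing northwest and southeast corners, turning southwest and northeast corners into cusps, and rotating $45^\circ$ clockwise; a cusp is downward- (resp. upward-) oriented if the front is traversed downward (resp. upward) through it. Write $\mathbb O$ for the set of centers of the $O$-squares. $\mathbf S(G)$ is the set of $n$-tuples of integer points in $[0,n)^2$ with exactly one point on each line $y=k$ and each line $x=k$, $0\le k<n$. For finite sets $A,B$ let $\mathcal I(A,B)=\#\{(a,b)\in A\times B:a_1<b_1,a_2<b_2\}$, $\mathcal J(A,B)=\frac12(\mathcal I(A,B)+\mathcal I(B,A))$, extended bilinearly; $M(\mathbf x)=\mathcal J(\mathbf x-\mathbb O,\mathbf x-\mathbb O)+1$ (independent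 of the choice of fundamental domain for the torus). $\mathbf x^+(G)$ (resp. $\mathbf x^-(G)$) is the generator whose points are the upper right (resp. lower left) corners of the squares marked $X$. *)

From mathcomp Require Import all_boot all_order all_fingroup all_algebra.
Set Implicit Arguments. Unset Strict Implicit. Unset Printing Implicit Defensive.
Import Order.TTheory GRing.Theory Num.Theory.

(* A grid diagram of grid number n is encoded by two permutations of 'I_n:
   in column i (i.e. the squares [i,i+1] x [*]) the X is in row gX i and the
   O is in row gO i.  "Exactly one X (resp. O) in every row and column" is
   exactly the statement that gX and gO are permutations.  The square of the
   X in column i is [i,i+1] x [gX i, gX i + 1]. *)

Section Grid.
Variables (n : nat) (gX gO : {perm 'I_n}).

Definition colX (j : 'I_n) : 'I_n := (gX^-1)%g j.
Definition colO (j : 'I_n) : 'I_n := (gO^-1)%g j.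

(* Following K: from the X of column i go vertically to the O of column i
   (row gO i), then horizontally to the X of that row, in column
   colX (gO i). *)
Definition next_col : {perm 'I_n} := (gO * gX^-1)%g.

(* G is a grid diagram (X and O in different squares) and K is a knot,
   i.e. the single-component condition: next_col is one cycle. *)
Definition knot_grid : Prop :=
  (forall i : 'I_n, gX i != gO i) /\
  (forall i j : 'I_n, exists k : nat, ((next_col ^+ k)%g i) = j).

Definition strictly_between (a b c : nat) : bool :=
  (minn a b < c < maxn a b)%N.

(* vertical segment of column i crosses horizontal segment of row j *)
Definition crossing (i j : 'I_n) : bool :=
  strictly_between (colO j) (colX j) i && strictly_between (gX i) (gO i) j.

(* vertical strand (X -> O) goes up; horizontal strand (O -> X) goes right *)
Definition vert_up (i : 'I_n) : bool := (gX i < gO i)%N.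
Definition horiz_right (j : 'I_n) : bool := (colO j < colX j)%N.

(* Vertical is over horizontal.  The crossing is positive (right-handed) iff
   det(over direction, under direction) > 0, i.e. iff exactly one of
   "vertical goes up", "horizontal goes right" holds. *)
Definition crossing_positive (i j : 'I_n) : bool := vert_up i != horiz_right j.

Definition writhe : int :=
  (\sum_(i : 'I_n) \sum_(j : 'I_n)
     (if crossing i j then (if crossing_positive i j then 1 else -1) else 0))%R.

(* Corners of K: one at every marking.  At the X of column c the vertical
   segment leaves towards gO c and the horizontal one comes from colO (gX c);
   at the O of column c the vertical arrives from gX c and the horizontal
   leaves towards colX (gO c).
   A corner is southwest if its two edges go north and east from it,
   northeast if they go south and west. *)
Definition X_vert_up (c : 'I_n) : bool := (gX c < gO c)%N.
Definition X_horiz_right (c : 'I_n) : bool := (c < colO (gX c))%N.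
Definition O_vert_up (c : 'I_n) : bool := (gO c < gX c)%N.
Definition O_horiz_right (c : 'I_n) : bool := (c < colX (gO c))%N.

Definition X_SW c := X_vert_up c && X_horiz_right c.
Definition X_NE c := ~~ X_vert_up c && ~~ X_horiz_right c.
Definition O_SW c := O_vert_up c && O_horiz_right c.
Definition O_NE c := ~~ O_vert_up c && ~~ O_horiz_right c.

(* After rotating 45 degrees clockwise, the front's upward direction is the
   original northwest direction.  The orientation goes X -> O vertically and
   O -> X horizontally, so: an SW corner at an O is traversed from the north
   edge to the east edge (downward), at an X from east to north (upward);
   an NE corner at an X is traversed from the west edge to the south edge
   (downward), at an O from south to west (upward). *)
Definition down_cusps : nat := #|[pred c : 'I_n | O_SW c]| + #|[pred c : 'I_n | X_NE c]|.
Definition up_cusps : nat := #|[pred c : 'I_n | X_SW c]| + #|[pred c : 'I_n | O_NE c]|.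

Local Open Scope ring_scope.

Definition point := (rat * rat)%type.

Definition Ocenters : seq point :=
  [seq (((nat_of_ord i)%:R + 1/2), ((nat_of_ord (gO i))%:R + 1/2)) | i : 'I_n <- enum 'I_n].

(* x^+: upper right corners of the X squares, reduced to [0,n)^2 (torus) *)
Definition xplus : seq point :=
  [seq ((((nat_of_ord i).+1 %% n)%N%:R), (((nat_of_ord (gX i)).+1 %% n)%N%:R)) | i : 'I_n <- enum 'I_n].

Definition xminus : seq point :=
  [seq ((nat_of_ord i)%:R, (nat_of_ord (gX i))%:R) | i : 'I_n <- enum 'I_n].

End Grid.

Local Open Scope ring_scope.

Definition Irel (A B : seq point) : nat :=
  (\sum_(a <- A) count (fun b : point => ((a.1 < b.1)%R && (a.2 < b.2)%R)) B)%N.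

Definition Jrel (A B : seq point) : rat := ((Irel A B + Irel B A)%N%:R) / 2.

(* M(x) = J(x - O, x - O) + 1, expanded bilinearly. *)
Definition Mgr (O x : seq point) : rat :=
  Jrel x x - Jrel x O - Jrel O x + Jrel O O + 1.

(* Expanding J bilinearly, M(x) - 1 is a signed count of pairs of points of x and
   of O in north-east position, i.e. a combination of the pair counts [ne_pairs] of
   the permutations gX and gO.  The writhe is rewritten in the same terms: the sign of
   the crossing of column i with row j is minus the product of the signed indicators
   of "i lies between the ends of row j" and "j lies between the ends of column i",
   corrected where row j ends on column i.  Since every pair is either north-east or
   south-east, the formula for x^- reduces to an identity at each single column, and
   this is where the cusps appear.  For x^+ the points are taken mod n, which only
   moves the X of the last column and the X of the top row; the boundary sums this
   creates cancel, and what remains is the count for x^- of the grid turned by a half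
   turn.  That grid has the same writhe and exchanges upward and downward cusps, the
   latter because X and O never share a square. *)

From mathcomp Require Import all_boot all_order all_fingroup all_algebra zify ring lra.
Import Order.TTheory GRing.Theory Num.Theory.
Set Implicit Arguments. Unset Strict Implicit. Unset Printing Implicit Defensive.
Local Open Scope ring_scope.

Notation "[[ b ]]" := ((nat_of_bool b)%:Z).

Section PairSums.
Variable n : nat.
Implicit Types (F G : 'I_n -> 'I_n -> int) (g h : 'I_n -> 'I_n).

Definition sum2 F : int := \sum_(c : 'I_n) \sum_(k : 'I_n) F c k.

Lemma sum2D F G : sum2 (fun c k => F c k + G c k) = sum2 F + sum2 G.
Proof. by rewrite /sum2 -big_split; apply: eq_bigr => c _; rewrite big_split. Qed.

Lemma sum2N F : sum2 (fun c k => - F c k) = - sum2 F.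
Proof. by rewrite /sum2 -sumrN; apply: eq_bigr => c _; rewrite sumrN. Qed.

Lemma eq_sum2 F G : (forall c k, F c k = G c k) -> sum2 F = sum2 G.
Proof. by move=> FG; apply: eq_bigr => c _; apply: eq_bigr => k _. Qed.

Lemma sum2_swap F : sum2 F = sum2 (fun c k => F k c).
Proof. exact: exchange_big. Qed.

Lemma reindex_sum2 (p q : 'I_n -> 'I_n) F : injective p -> injective q ->
  sum2 (fun c k => F (p c) (q k)) = sum2 F.
Proof.
move=> p_inj q_inj; rewrite /sum2 [RHS](reindex_inj p_inj).
by apply: eq_bigr => c _; rewrite [RHS](reindex_inj q_inj).
Qed.

Lemma sum2_diag F : sum2 (fun c k => [[c == k]] * F c k) = \sum_c F c c.
Proof.
apply: eq_bigr => c _; rewrite (bigD1 c) //= eqxx mul1r big1 ?addr0 // => k.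
by rewrite eq_sym => /negbTE ->; rewrite mul0r.
Qed.

Lemma sum_pick_perm (p : {perm 'I_n}) (v : 'I_n) (f : 'I_n -> int) :
  \sum_k [[p k == v]] * f k = f ((p^-1)%g v).
Proof.
rewrite (bigD1 ((p^-1)%g v)) //= permKV eqxx mul1r big1 ?addr0 // => k.
by move=> ne_k; rewrite -(inj_eq (@perm_inj _ (p^-1)%g)) permK (negbTE ne_k) mul0r.
Qed.

Lemma card_sum (P : pred 'I_n) : (#|P|)%:Z = \sum_c [[P c]].
Proof.
rewrite -sum1_card -natz natr_sum big_mkcond /=.
by apply: eq_bigr => c _; rewrite -topredE /=; case: (P c).
Qed.

Lemma sum_reindex_inj (f : 'I_n -> 'I_n) (F : 'I_n -> int) :
  injective f -> \sum_c F (f c) = \sum_c F c.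
Proof. by move=> f_inj; rewrite [RHS](reindex_inj f_inj). Qed.

Lemma sum_eq1 (v : 'I_n) : \sum_c [[c == v]] = 1.
Proof. by rewrite (bigD1 v) //= eqxx big1 ?addr0 // => c /negbTE ->. Qed.

Lemma sum2_pick_l (Q : pred 'I_n) (u : 'I_n) (P : 'I_n -> 'I_n -> bool) :
  (forall c, Q c = (c == u)) -> sum2 (fun c k => [[Q c && P c k]]) = \sum_k [[P u k]].
Proof.
move=> Qu; rewrite sum2_swap; apply: eq_bigr => k _.
rewrite (bigD1 u) //= Qu eqxx big1 ?addr0 // => c /negbTE nu.
by rewrite Qu nu.
Qed.

Lemma sum2_pick_r (Q : pred 'I_n) (u : 'I_n) (P : 'I_n -> 'I_n -> bool) :
  (forall k, Q k = (k == u)) -> sum2 (fun c k => [[Q k && P c k]]) = \sum_c [[P c u]].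
Proof. by move=> Qu; rewrite sum2_swap (sum2_pick_l (fun c k => P k c) Qu). Qed.

Lemma perm_val_eq (p : {perm 'I_n}) (c k : 'I_n) : (c == k :> nat) = (p c == p k :> nat).
Proof. by rewrite !val_eqE (inj_eq (@perm_inj _ p)). Qed.

Definition lt_pairs : int := sum2 (fun c k => [[(c < k)%N]]).
Definition ne_pairs g h : int := sum2 (fun c k => [[(c < k)%N && (g c < h k)%N]]).
Definition ne_pairs_le g h : int := sum2 (fun c k => [[(c <= k)%N && (g c <= h k)%N]]).
Definition se_pairs g h : int := sum2 (fun c k => [[(c < k)%N && (h k < g c)%N]]).

Lemma ne_pairs_add_se_pairs g h :
  ne_pairs g h + se_pairs g h + sum2 (fun c k => [[(c < k)%N && (g c == h k :> nat)]])
  = lt_pairs.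
Proof. by rewrite -!sum2D; apply: eq_sum2 => c k; lia. Qed.

Lemma ne_pairs_le_add_se_pairs g h :
  ne_pairs_le g h + se_pairs g h = lt_pairs + \sum_c [[(g c <= h c)%N]].
Proof.
rewrite -(sum2_diag (fun c k => [[(g c <= h k)%N]])) -!sum2D.
apply: eq_sum2 => c k /=.
by case: (eqVneq c k) => [->|]; [lia | rewrite -val_eqE /=; lia].
Qed.

Lemma sum2_lt_eq_perm (p : {perm 'I_n}) g :
  sum2 (fun c k => [[(c < k)%N && (p c == g k :> nat)]]) = \sum_k [[((p^-1)%g (g k) < k)%N]].
Proof.
rewrite sum2_swap; apply: eq_bigr => k _.
rewrite -(sum_pick_perm p (g k) (fun c => [[(c < k)%N]])); apply: eq_bigr => c _.
by rewrite val_eqE; case: (_ == _); case: (c < k)%N.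
Qed.

Lemma ne_pairs_add_se_pairs_perm (p : {perm 'I_n}) :
  ne_pairs p p + se_pairs p p = lt_pairs.
Proof.
rewrite -(ne_pairs_add_se_pairs p p) sum2_lt_eq_perm big1 ?addr0 // => k _.
by rewrite permK ltnn.
Qed.

End PairSums.

Lemma sum2_reindex_perm n (p : {perm 'I_n}) (F : 'I_n -> 'I_n -> 'I_n -> int) :
  sum2 (fun i j => F i ((p^-1)%g j) j) = sum2 (fun i k => F i k (p k)).
Proof.
rewrite -(reindex_sum2 (fun i j => F i ((p^-1)%g j) j) (@inj_id _) (@perm_inj _ p)) /=.
by apply: eq_sum2 => i k; rewrite permK.
Qed.

Lemma se_pairsE n (p : {perm 'I_n}) (g : 'I_n -> 'I_n) :
  se_pairs p g = sum2 (fun i j => [[((p^-1)%g j < i)%N && (g i < j)%N]]).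
Proof.
by rewrite (sum2_reindex_perm p (fun i k j => [[(k < i)%N && (g i < j)%N]])) sum2_swap.
Qed.

Lemma sum2_pick_row n (g : 'I_n -> 'I_n) (P : 'I_n -> 'I_n -> bool) :
  sum2 (fun i j => [[(j == g i :> nat) && P i j]]) = \sum_i [[P i (g i)]].
Proof.
apply: eq_bigr => i _; rewrite (bigD1 (g i)) //= eqxx big1 ?addr0 // => j.
by rewrite val_eqE => /negbTE ->.
Qed.

Lemma crossing_sign_expand (i j a b x y : nat) :
  (j == b) = (x == i) -> (j == a) = (y == i) ->
  (if strictly_between x y i && strictly_between a b j then
     (if (a < b)%N != (x < y)%N then 1 else -1) else 0 : int)
  = - [[(x < i)%N && (a < j)%N]] + [[(x < i)%N && (b < j)%N]]
    + [[(y < i)%N && (a < j)%N]] - [[(y < i)%N && (b < j)%N]]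
    - [[(j == b) && ((a < b)%N && (y < i)%N)]] - [[(j == a) && ((b < a)%N && (x < i)%N)]].
Proof.
rewrite /strictly_between => jb ja.
case: (ltnP x i) => xi; case: (ltnP y i) => yi; case: (ltnP a j) => aj; case: (ltnP b j) => bj;
  by case: ifP => cross; try case: ifP => sign; lia.
Qed.

Lemma writheE n (gX gO : {perm 'I_n}) : writhe gX gO =
  sum2 (fun i j => if crossing gX gO i j then (if crossing_positive gX gO i j then 1 else -1) else 0).
Proof. by []. Qed.

Section Grid.
Variables (n : nat) (gX gO : {perm 'I_n}).
Local Notation cX := (colX gX).
Local Notation cO := (colO gO).

Lemma colO_eq (i j : 'I_n) : (cO j == i :> nat) = (j == gO i :> nat).
Proof. by rewrite !val_eqE /colO (can2_eq (permKV gO) (permK gO)). Qed.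

Lemma colX_eq (i j : 'I_n) : (cX j == i :> nat) = (j == gX i :> nat).
Proof. by rewrite !val_eqE /colX (can2_eq (permKV gX) (permK gX)). Qed.

Definition X_corners : int := \sum_i [[(gX i < gO i)%N && (cX (gO i) < i)%N]].
Definition O_corners : int := \sum_i [[(gO i < gX i)%N && (cO (gX i) < i)%N]].

Lemma writhe_se_pairs : writhe gX gO =
  se_pairs gX gX - se_pairs gX gO - se_pairs gO gX + se_pairs gO gO - X_corners - O_corners.
Proof.
have -> : writhe gX gO = sum2 (fun i j =>
    - [[(cO j < i)%N && (gX i < j)%N]] + [[(cO j < i)%N && (gO i < j)%N]]
    + [[(cX j < i)%N && (gX i < j)%N]] - [[(cX j < i)%N && (gO i < j)%N]]
    - [[(j == gO i :> nat) && ((gX i < gO i)%N && (cX j < i)%N)]]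
    - [[(j == gX i :> nat) && ((gO i < gX i)%N && (cO j < i)%N)]]).
  apply: eq_sum2 => i j; apply: crossing_sign_expand.
  - by rewrite colO_eq.
  - by rewrite colX_eq.
rewrite !sum2D !sum2N !sum2_pick_row /X_corners /O_corners /colX /colO -!se_pairsE.
by ring.
Qed.

Lemma up_cusps_corners : (up_cusps gX gO)%:Z =
  X_corners + O_corners + \sum_c [[(gX c <= gO c)%N]] - \sum_c [[((gO^-1)%g (gX c) < c)%N]].
Proof.
rewrite /up_cusps PoszD !card_sum /X_corners /O_corners -!big_split -sumrB /=.
apply: eq_bigr => c _; rewrite /X_SW /O_NE /X_vert_up /X_horiz_right /O_vert_up /O_horiz_right.
by have := colO_eq c (gX c); have := colX_eq c (gO c); rewrite /colO; lia.
Qed.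

Definition Mcount (g h : 'I_n -> 'I_n) : int :=
  ne_pairs g g - ne_pairs_le g h - ne_pairs h g + ne_pairs h h.

Lemma Mcount_writhe_up_cusps : Mcount gX gO = - writhe gX gO - (up_cusps gX gO)%:Z.
Proof.
rewrite writhe_se_pairs up_cusps_corners /Mcount.
have := ne_pairs_add_se_pairs_perm gX; have := ne_pairs_add_se_pairs_perm gO.
have := ne_pairs_le_add_se_pairs gX gO.
have := ne_pairs_add_se_pairs gO gX; rewrite sum2_lt_eq_perm.
by move: (\sum_c _) (\sum_c _) => s1 s2; lia.
Qed.

End Grid.

Section Rotation.
Variable n : nat.
Implicit Types (g h : {perm 'I_n}) (a b c : 'I_n).

Definition rev_perm : {perm 'I_n} := perm (@rev_ord_inj n).

Lemma rev_permE c : rev_perm c = rev_ord c.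
Proof. exact: permE. Qed.

(* Rotating the grid by a half turn conjugates both permutations by [rev_ord]. *)
Definition rotate g : {perm 'I_n} := (g ^ rev_perm)%g.

Lemma rotateE g c : rotate g (rev_ord c) = rev_ord (g c).
Proof. by rewrite /rotate -!rev_permE permJ. Qed.

Lemma rotateV g : ((rotate g)^-1)%g = rotate (g^-1)%g.
Proof. by rewrite /rotate conjVg. Qed.

Lemma rev_ord_lt a b : (rev_ord a < rev_ord b)%N = (b < a)%N.
Proof. by have := ltn_ord a; have := ltn_ord b; rewrite /=; lia. Qed.

Lemma rev_ord_le a b : (rev_ord a <= rev_ord b)%N = (b <= a)%N.
Proof. by have := ltn_ord a; have := ltn_ord b; rewrite /=; lia. Qed.

Lemma ne_pairs_rotate g h : ne_pairs (rotate g) (rotate h) = ne_pairs h g.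
Proof.
rewrite /ne_pairs -[LHS](reindex_sum2 _ (@rev_ord_inj n) (@rev_ord_inj n)) sum2_swap.
by apply: eq_sum2 => c k; rewrite !rotateE !rev_ord_lt.
Qed.

Lemma ne_pairs_le_rotate g h : ne_pairs_le (rotate g) (rotate h) = ne_pairs_le h g.
Proof.
rewrite /ne_pairs_le -[LHS](reindex_sum2 _ (@rev_ord_inj n) (@rev_ord_inj n)) sum2_swap.
by apply: eq_sum2 => c k; rewrite !rotateE !rev_ord_le.
Qed.

Lemma Mcount_rotate g h :
  Mcount (rotate g) (rotate h) = ne_pairs g g - ne_pairs g h - ne_pairs_le h g + ne_pairs h h.
Proof. by rewrite /Mcount !ne_pairs_rotate ne_pairs_le_rotate; ring. Qed.

Lemma strictly_between_rev a b c :
  strictly_between (rev_ord a) (rev_ord b) (rev_ord c) = strictly_between a b c.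
Proof.
by have := ltn_ord a; have := ltn_ord b; have := ltn_ord c; rewrite /strictly_between /=; lia.
Qed.

Lemma writhe_rotate g h : writhe (rotate g) (rotate h) = writhe g h.
Proof.
rewrite !writheE -[LHS](reindex_sum2 _ (@rev_ord_inj n) (@rev_ord_inj n)).
apply: eq_sum2 => i j.
rewrite /crossing /crossing_positive /vert_up /horiz_right /colO /colX.
rewrite !rotateV !rotateE !strictly_between_rev !rev_ord_lt.
case: ifP => // /andP[]; rewrite /strictly_between => cross_i cross_j.
by congr (if _ then _ else _); lia.
Qed.

Lemma card_rev_ord (P : pred 'I_n) : #|[pred c | P (rev_ord c)]| = #|P|.
Proof.
apply/eqP; rewrite -eqz_nat !card_sum; apply/eqP.
by rewrite [RHS](reindex_inj (@rev_ord_inj n)); apply: eq_bigr.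
Qed.

Lemma neq_permV g h c : g c != h c -> (h^-1)%g (g c) != c.
Proof. by apply: contra => /eqP hVgc; rewrite -{2}hVgc permKV. Qed.

Lemma X_SW_rotate g h c :
  g c != h c -> X_SW (rotate g) (rotate h) (rev_ord c) = X_NE g h c.
Proof.
move=> gh; have := neq_permV gh.
rewrite /X_SW /X_NE /X_vert_up /X_horiz_right /colO rotateV !rotateE !rev_ord_lt.
by rewrite -!val_eqE /= in gh *; lia.
Qed.

Lemma O_NE_rotate g h c :
  g c != h c -> O_NE (rotate g) (rotate h) (rev_ord c) = O_SW g h c.
Proof.
rewrite eq_sym => hg; have := neq_permV hg.
rewrite /O_NE /O_SW /O_vert_up /O_horiz_right /colX rotateV !rotateE !rev_ord_lt.
by rewrite -!val_eqE /= in hg *; lia.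
Qed.

Lemma up_cusps_rotate g h :
  (forall c, g c != h c) -> up_cusps (rotate g) (rotate h) = down_cusps g h.
Proof.
move=> gh; rewrite /up_cusps /down_cusps addnC -(card_rev_ord (O_SW g h)) -(card_rev_ord (X_NE g h)).
by congr (_ + _); apply: eq_card => c; rewrite !inE -{1}[c]rev_ordK ?O_NE_rotate ?X_SW_rotate.
Qed.
End Rotation.

Section Wrap.
Variable m : nat.
Local Notation succ x := (x.+1 %% m.+1)%N.

Lemma succ_modE (x : nat) : (x <= m)%N -> succ x = if x == m then 0 else x.+1.
Proof.
move=> le_xm; case: eqP => [->|ne_xm]; first by rewrite modnn.
by rewrite modn_small //; lia.
Qed.

Lemma succ_mod_ltn2 (a b x y : nat) : (a <= m)%N -> (b <= m)%N -> (x <= m)%N -> (y <= m)%N ->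
  (a == b) = (x == y) ->
  [[(succ a < succ b)%N && (succ x < succ y)%N]]
  = [[(a < b)%N && (x < y)%N]] + [[(a == m) && (x < y)%N]] - [[(b == m) && (x < y)%N]]
    + [[(x == m) && (succ a < succ b)%N]] - [[(y == m) && (succ a < succ b)%N]].
Proof.
move=> am bm xm ym ab_xy.
rewrite (succ_modE am) (succ_modE bm) (succ_modE xm) (succ_modE ym).
by repeat case: ifP => ?; lia.
Qed.

Lemma succ_mod_leq2 (a b x y : nat) : (a <= m)%N -> (b <= m)%N -> (x <= m)%N -> (y <= m)%N ->
  [[(succ a <= b)%N && (succ x <= y)%N]]
  = [[(a < b)%N && (x < y)%N]] + [[(x == m) && (a < b)%N]]
    + [[(a == m) && (x < y)%N]] + [[(a == m) && (x == m)]].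
Proof.
move=> am bm xm ym; rewrite (succ_modE am) (succ_modE xm).
by repeat case: ifP => ?; lia.
Qed.

Lemma ltn_succ_mod2 (a b x y : nat) : (a <= m)%N -> (b <= m)%N -> (x <= m)%N -> (y <= m)%N ->
  [[(a < succ b)%N && (x < succ y)%N]]
  = [[(a <= b)%N && (x <= y)%N]] - [[(y == m) && (a <= b)%N]]
    - [[(b == m) && (x <= y)%N]] + [[(b == m) && (y == m)]].
Proof.
move=> am bm xm ym; rewrite (succ_modE bm) (succ_modE ym).
by repeat case: ifP => ?; lia.
Qed.

Lemma wrap_boundary (u v w : nat) : (u <= m)%N -> (v <= m)%N -> (w == m) = (v == m) ->
  [[(u <= w)%N]] - [[(u < w)%N]] + [[(succ v < u)%N]] - [[(u < succ v)%N]]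
  - [[(v < u)%N]] + [[(u <= v)%N]] - [[w == m]] - [[w == m]]
  = [[u == w]] - [[u == succ v]].
Proof. by move=> um vm wv; rewrite (succ_modE vm); case: ifP => ?; lia. Qed.

End Wrap.

Section WrapGrid.
Variables (m : nat) (gX gO : {perm 'I_m.+1}).
Local Notation succ x := (x.+1 %% m.+1)%N.
Local Notation N := (@ord_max m).
Local Notation v := (colX gX N).
Local Notation w := (gX N).

Lemma gX_eq_max (c : 'I_m.+1) : (gX c == m :> nat) = (c == v).
Proof. by rewrite -(can2_eq (permK gX) (permKV gX)). Qed.

Lemma wrap_ne_pairs_XX :
  sum2 (fun c k => [[(succ c < succ k)%N && (succ (gX c) < succ (gX k))%N]])
  = ne_pairs gX gX + \sum_(u : 'I_m.+1) [[(w < u)%N]] - \sum_(u : 'I_m.+1) [[(u < w)%N]]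
    + \sum_(u : 'I_m.+1) [[(succ v < u)%N]] - \sum_(u : 'I_m.+1) [[(u < succ v)%N]].
Proof.
rewrite (eq_sum2 (fun c k => succ_mod_ltn2 (leq_ord c) (leq_ord k) (leq_ord (gX c))
  (leq_ord (gX k)) (perm_val_eq gX c k))) !sum2D !sum2N.
rewrite (sum2_pick_l (u := N) _ (fun=> erefl)) (sum2_pick_r (u := N) _ (fun=> erefl)).
rewrite (sum2_pick_l _ gX_eq_max) (sum2_pick_r _ gX_eq_max).
rewrite (sum_reindex_inj (fun u => [[(w < u)%N]]) (@perm_inj _ gX)).
rewrite (sum_reindex_inj (fun u => [[(u < w)%N]]) (@perm_inj _ gX)).
rewrite (sum_reindex_inj (fun u : 'I_m.+1 => [[(succ v < u)%N]]) (@ordS_inj _)).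
by rewrite (sum_reindex_inj (fun u : 'I_m.+1 => [[(u < succ v)%N]]) (@ordS_inj _)).
Qed.

Lemma wrap_ne_pairs_XO :
  sum2 (fun c k => [[(succ c <= k)%N && (succ (gX c) <= gO k)%N]])
  = ne_pairs gX gO + \sum_(u : 'I_m.+1) [[(v < u)%N]] + \sum_(u : 'I_m.+1) [[(w < u)%N]]
    + \sum_(u : 'I_m.+1) [[w == m :> nat]].
Proof.
rewrite (eq_sum2 (fun c k => succ_mod_leq2 (leq_ord c) (leq_ord k) (leq_ord (gX c))
  (leq_ord (gO k)))) !sum2D.
rewrite (sum2_pick_l _ gX_eq_max) !(sum2_pick_l (u := N) _ (fun=> erefl)).
by rewrite (sum_reindex_inj (fun u => [[(w < u)%N]]) (@perm_inj _ gO)).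
Qed.

Lemma wrap_ne_pairs_OX :
  sum2 (fun c k => [[(c < succ k)%N && (gO c < succ (gX k))%N]])
  = ne_pairs_le gO gX - \sum_(u : 'I_m.+1) [[(u <= v)%N]] - \sum_(u : 'I_m.+1) [[(u <= w)%N]]
    + \sum_(u : 'I_m.+1) [[w == m :> nat]].
Proof.
rewrite (eq_sum2 (fun c k => ltn_succ_mod2 (leq_ord c) (leq_ord k) (leq_ord (gO c))
  (leq_ord (gX k)))) !sum2D !sum2N.
rewrite (sum2_pick_r _ gX_eq_max) !(sum2_pick_r (u := N) _ (fun=> erefl)).
by rewrite (sum_reindex_inj (fun u => [[(u <= w)%N]]) (@perm_inj _ gO)).
Qed.

(* The terms I(x^+, x^+) - I(x^+, O) - I(O, x^+) of M(x^+), with coordinates mod n. *)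
Lemma wrap_ne_pairs :
  sum2 (fun c k => [[(succ c < succ k)%N && (succ (gX c) < succ (gX k))%N]])
  - sum2 (fun c k => [[(succ c <= k)%N && (succ (gX c) <= gO k)%N]])
  - sum2 (fun c k => [[(c < succ k)%N && (gO c < succ (gX k))%N]])
  = ne_pairs gX gX - ne_pairs gX gO - ne_pairs_le gO gX.
Proof.
rewrite wrap_ne_pairs_XX wrap_ne_pairs_XO wrap_ne_pairs_OX.
have wv : (w == m :> nat) = (v == m :> nat) by rewrite gX_eq_max eq_sym.
have : \sum_(u : 'I_m.+1) [[(u <= w)%N]] - \sum_(u : 'I_m.+1) [[(u < w)%N]]
    + \sum_(u : 'I_m.+1) [[(succ v < u)%N]] - \sum_(u : 'I_m.+1) [[(u < succ v)%N]]
    - \sum_(u : 'I_m.+1) [[(v < u)%N]] + \sum_(u : 'I_m.+1) [[(u <= v)%N]]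
    - \sum_(u : 'I_m.+1) [[w == m :> nat]] - \sum_(u : 'I_m.+1) [[w == m :> nat]] = 0.
  rewrite -!(sumrB, big_split).
  rewrite (eq_bigr _ (fun u _ => wrap_boundary (leq_ord u) (leq_ord v) wv)) sumrB.
  by rewrite (sum_eq1 w) (sum_eq1 (ordS v)) subrr.
lia.
Qed.

End WrapGrid.

Lemma Irel_enum n (f g : 'I_n -> point) :
  (Irel [seq f i | i <- enum 'I_n] [seq g k | k <- enum 'I_n])%:Z =
  sum2 (fun c k => [[((f c).1 < (g k).1) && ((f c).2 < (g k).2)]]).
Proof.
rewrite /Irel big_map big_enum /= -natz natr_sum; apply: eq_bigr => c _.
rewrite count_map -sum1_count big_mkcond big_enum /= natr_sum.
by apply: eq_bigr => k _ /=; case: ifP.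
Qed.

Lemma lt_nat_half (x y : nat) : ((x%:R : rat) < y%:R + 1/2) = (x <= y)%N.
Proof.
case: leqP => [le_xy | lt_yx].
  have : (x%:R : rat) <= y%:R by rewrite ler_nat.
  lra.
apply/negbTE; rewrite -leNgt.
have : ((y + 1)%:R : rat) <= x%:R by rewrite ler_nat addn1.
rewrite natrD; lra.
Qed.

Lemma lt_half_nat (x y : nat) : ((x%:R : rat) + 1/2 < y%:R) = (x < y)%N.
Proof.
case: ltnP => [lt_xy | le_yx].
  have : ((x + 1)%:R : rat) <= y%:R by rewrite ler_nat addn1.
  rewrite natrD; lra.
apply/negbTE; rewrite -leNgt.
have : (y%:R : rat) <= x%:R by rewrite ler_nat.
lra.
Qed.

Lemma lt_half_half (x y : nat) : ((x%:R : rat) + 1/2 < y%:R + 1/2) = (x < y)%N.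
Proof. by rewrite ltrD2r ltr_nat. Qed.

Lemma Mgr_int (O x : seq point) :
  Mgr O x = ((Irel x x)%:Z - (Irel x O)%:Z - (Irel O x)%:Z + (Irel O O)%:Z + 1)%:~R.
Proof. by rewrite /Mgr /Jrel !(rmorphD, rmorphN) /= !pmulrn mulr1z; field. Qed.

Lemma Mgr_xminus n (gX gO : {perm 'I_n}) :
  Mgr (Ocenters gO) (xminus gX) = (Mcount gX gO + 1)%:~R.
Proof.
rewrite Mgr_int /Mcount /Ocenters /xminus; congr (_ - _ - _ + _ + 1)%:~R;
  rewrite Irel_enum; apply: eq_sum2 => c k /=;
  by rewrite ?lt_half_half ?lt_nat_half ?lt_half_nat ?ltr_nat.
Qed.

Lemma Mgr_xplus n (gX gO : {perm 'I_n}) :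
  Mgr (Ocenters gO) (xplus gX) = (Mcount (rotate gX) (rotate gO) + 1)%:~R.
Proof.
case: n gX gO => [|m] gX gO.
  by rewrite Mgr_int !Irel_enum /Mcount /ne_pairs /ne_pairs_le /sum2 !big_ord0.
rewrite Mgr_int Mcount_rotate -wrap_ne_pairs /Ocenters /xplus.
congr (_ - _ - _ + _ + 1)%:~R; rewrite Irel_enum; apply: eq_sum2 => c k /=;
  by rewrite ?lt_half_half ?lt_nat_half ?lt_half_nat ?ltr_nat.
Qed.

Unset Implicit Arguments.

Theorem lemma6p4 (n : nat) (gX gO : {perm 'I_n}) :
  knot_grid gX gO ->
  Mgr (Ocenters gO) (xplus gX) = - (writhe gX gO)%:~R - (down_cusps gX gO)%:R + 1
  /\ Mgr (Ocenters gO) (xminus gX) = - (writhe gX gO)%:~R - (up_cusps gX gO)%:R + 1.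
Proof.
move=> [X_ne_O _]; rewrite Mgr_xplus Mgr_xminus !Mcount_writhe_up_cusps.
rewrite writhe_rotate up_cusps_rotate //.
by split; rewrite !(rmorphD, rmorphN) /= pmulrn.
Qed.
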